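(* Let $\mathcal G=(\mathcal V,\mathcal E,W)$ be a network, $h\in\mathbb{R}^{\mathcal V}$, and consider the SNC game with binary actions on $\mathcal G$ with external field $h$. Let $\mathcal V=\mathcal R\cup\mathcal S$, $\mathcal R\cap\mathcal S=\emptyset$, be a binary partition such that $\mathcal G_{\mathcal R}$ is structurally balanced and $\mathcal G_{\mathcal S}$ is undirected, and let $\tau\in\{\pm1\}^{\mathcal R}$ be such that $\mathcal G_{\mathcal R}^{[\tau]}$ is unsigned. Let $h^-,h^+\in\mathbb{R}^{\mathcal R}$ be given by $h_i^+=\tau_ih_i+w_i^{\mathcal S}$ and $h_i^-=\tau_ih_i-w_i^{\mathcal S}$ for $i\in\mathcal R$. If $\mathcal G_{\mathcal R}$ is $(h^-,h^+)$-indecomposable and $w_i^{\mathcal R}-|h_i|>w_i^{\mathcal S}$ for all $i\in\mathcal R$, then there exists a globally BR-stable subset of the set of Nash equilibria of the game.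
   Context: A network is a triple $\mathcal G=(\mathcal V,\mathcal E,W)$ where $\mathcal V$ is a finite nonempty set, $\mathcal E\subseteq\mathcal V\times\mathcal V$, and $W\in\mathbb{R}^{\mathcal V\times\mathcal V}$ has zero diagonal and satisfies $W_{ij}\neq0$ iff $(i,j)\in\mathcal E$ (weights may have either sign). It is unsigned if $W\ge0$ entrywise and undirected if its weight matrix is symmetric. For $\mathcal U\subseteq\mathcal V$, the subnetwork $\mathcal G_{\mathcal U}$ has node set $\mathcal U$, links $\mathcal E\cap(\mathcal U\times\mathcal U)$ and weight matrix $W_{\mathcal U\mathcal U}$. A network is structurally balanced if its node set can be written as a disjoint union of two sets with nonnegative weights on links within each set and nonpositive weights on links between the two sets. For $\tau\in\{\pm1\}^{\mathcal R}$, $\mathcal G_{\mathcal R}^{[\tau]}$ is the network with the same nodes and links as $\mathcal G_{\mathcal R}$ and weight matrix $[\tau]W_{\mathcal R\mathcal R}[\tau]$, where $[\tau]$ is the diagonal matrix with diagonal $\tau$. For $i\in\mathcal V$ and $\mathcal B\subseteq\mathcal V$, $w_i^{\mathcal B}=\sum_{j\in\mathcal B}|W_{ij}|$. Indecomposability: a network with node set $\mathcal U$ and $h^-\le h^+$ in $\mathbb{R}^{\mathcal U}$ is $(h^-,h^+)$-indecomposable if for every partition $\mathcal U=\mathcal U^-\cup\mathcal U^+$ into two disjoint nonempty sets there is a node $i$ with either $i\in\mathcal U^+$ and $w_i^{\mathcal U^+}+h_i^+<w_i^{\mathcal U^-}$, or $i\in\mathcal U^-$ and $w_i^{\mathcal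 U^-}-h_i^-<w_i^{\mathcal U^+}$. The SNC game with binary actions on $\mathcal G$ with external field $h\in\mathbb{R}^{\mathcal V}$ has player set $\mathcal V$, action set $\{-1,+1\}$ for each player, strategy profiles $\mathcal X=\{\pm1\}^{\mathcal V}$, and utilities $u_i(x)=h_ix_i+x_i\sum_{j\in\mathcal V}W_{ij}x_j$. Best responses $\mathcal B_i(x_{-i})=\arg\max_{x_i\in\{\pm1\}}u_i(x_i,x_{-i})$; Nash equilibrium: $x^*_i\in\mathcal B_i(x^*_{-i})$ for all $i$. A BR-path of length $l\ge0$ from $x$ to $y$ is a sequence $x^{(0)}=x,\dots,x^{(l)}=y$ such that for each $k$ some player $i_k$ has $x^{(k)}_{-i_k}=x^{(k-1)}_{-i_k}$ and $x^{(k)}_{i_k}\in\mathcal B_{i_k}(x^{(k-1)}_{-i_k})\setminus\{x^{(k-1)}_{i_k}\}$. A set $\mathcal X^*\subseteq\mathcal X$ is globally BR-reachable if from every profile there is a BR-path to some element of $\mathcal X^*$; BR-invariant if there is no BR-path from an element of $\mathcal X^*$ to an element outside; globally BR-stable if both. *)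

From mathcomp Require Import all_boot all_order all_algebra.
Set Implicit Arguments. Unset Strict Implicit. Unset Printing Implicit Defensive.
Import Order.TTheory GRing.Theory Num.Theory.
Local Open Scope ring_scope.

Section Defs.
Variables (R : realFieldType) (V : finType).

Definition wB (W : V -> V -> R) (i : V) (B : {set V}) : R :=
  \sum_(j in B) `|W i j|.

Definition structurally_balanced (W : V -> V -> R) (U : {set V}) : Prop :=
  exists A : {set V}, A \subset U /\
    forall i j, i \in U -> j \in U ->
      (((i \in A) == (j \in A)) -> 0 <= W i j) /\
      (((i \in A) != (j \in A)) -> W i j <= 0).

Definition undirected_on (W : V -> V -> R) (U : {set V}) : Prop :=
  forall i j, i \in U -> j \in U -> W i j = W j i.

Definition sign_vector (tau : V -> R) (U : {set V}) : Prop :=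
  forall i, i \in U -> tau i = 1 \/ tau i = -1.

Definition unsigned_gauge (W : V -> V -> R) (U : {set V}) (tau : V -> R) : Prop :=
  forall i j, i \in U -> j \in U -> 0 <= tau i * W i j * tau j.

Definition indecomposable (W : V -> V -> R) (U : {set V}) (hm hp : V -> R) : Prop :=
  (forall i, i \in U -> hm i <= hp i) /\
  forall Up : {set V}, Up \subset U -> Up != set0 -> U :\: Up != set0 ->
    exists i,
      (i \in Up /\ wB W i Up + hp i < wB W i (U :\: Up)) \/
      (i \in U :\: Up /\ wB W i (U :\: Up) - hm i < wB W i Up).

(* profiles: true = +1, false = -1 *)
Definition spin (b : bool) : R := if b then 1 else -1.

Definition profile := {ffun V -> bool}.

Definition upd (x : profile) (i : V) (a : bool) : profile :=
  [ffun j => if j == i then a else x j].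

Definition utility (W : V -> V -> R) (h : V -> R) (i : V) (x : profile) : R :=
  h i * spin (x i) + spin (x i) * \sum_(j : V) W i j * spin (x j).

Definition best_resp W h (x : profile) (i : V) (a : bool) : Prop :=
  forall b : bool, utility W h i (upd x i b) <= utility W h i (upd x i a).

Definition nash W h (x : profile) : Prop := forall i, best_resp W h x i (x i).

Definition br_step W h (x y : profile) : Prop :=
  exists i, (forall j, j != i -> y j = x j) /\ best_resp W h x i (y i) /\ y i != x i.

Inductive br_path W h : profile -> profile -> Prop :=
  | br_refl x : br_path W h x x
  | br_cons x y z : br_step W h x y -> br_path W h y z -> br_path W h x z.

Definition globally_BR_reachable W h (Xs : {set profile}) : Prop :=
  forall x, exists2 y, y \in Xs & br_path W h x y.

Definition BR_invariant W h (Xs : {set profile}) : Prop :=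
  forall x y, x \in Xs -> br_path W h x y -> y \in Xs.

Definition globally_BR_stable W h (Xs : {set profile}) : Prop :=
  globally_BR_reachable W h Xs /\ BR_invariant W h Xs.

End Defs.

(* Read the actions of the players of R in the gauge tau (opinions y_i = tau_i x_i), in
   which G_R is unsigned, so that raising one opinion raises the gauged field tau_j F_j of
   every other player of R.  From any profile, let the unsatisfied players of opinion +1
   flip down until none is left, then the unsatisfied players of opinion -1 flip up; the
   second phase keeps the players of opinion +1 satisfied.  In the resulting profile
   (h^-,h^+)-indecomposability forces a consensus of opinions, and the condition
   w_i^R - |h_i| > w_i^S makes every player of R strictly satisfied there, so that from then
   on only players of S move.  With R frozen, the undirected game on S has an exact potential
   that strictly increases along strict improvements.  Hence from every profile one reaches a
   profile all of whose BR-descendants are Nash equilibria, and the set of such profiles is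
   BR-invariant by construction. *)

From mathcomp Require Import all_boot all_order all_algebra.
From mathcomp Require Import boolp lra ring.
Import Order.TTheory GRing.Theory Num.Theory.
Local Open Scope ring_scope.
Set Implicit Arguments. Unset Strict Implicit.

Lemma spinN (R : realFieldType) b : spin R (~~ b) = - spin R b.
Proof. by case: b; rewrite /= ?opprK. Qed.

Lemma spin_sqr (R : realFieldType) b : spin R b * spin R b = 1.
Proof. by case: b; rewrite /= ?mulrNN mulr1. Qed.

Lemma spinM (R : realFieldType) b c : spin R b * spin R c = spin R (b == c).
Proof. by case: b; case: c; rewrite /= ?mulrNN ?mulr1 ?mul1r ?mulrN1. Qed.

Lemma eq_spin (R : realFieldType) b c : (spin R b == spin R c) = (b == c).
Proof. by case: b; case: c; rewrite /= ?eqxx //; apply/negbTE/eqP; lra. Qed.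

Lemma normr_spin (R : realFieldType) b : `|spin R b| = 1.
Proof. by case: b; rewrite /= ?normrN normr1. Qed.

Lemma sum_update (R : zmodType) (V : finType) (P : pred V) (f f' : V -> R) i :
  P i -> (forall k, k != i -> f' k = f k) ->
  \sum_(k | P k) f' k = \sum_(k | P k) f k + (f' i - f i).
Proof.
move=> Pi eq_f; rewrite (bigD1 i) //= [in RHS](bigD1 i) //=.
rewrite (eq_bigr f) => [|k /andP[_ /eq_f]] //.
by rewrite [RHS]addrC addrA subrK.
Qed.

Lemma sum_setC_split (R : nmodType) (V : finType) (A : {set V}) (f : V -> R) :
  \sum_k f k = \sum_(k in A) f k + \sum_(k in ~: A) f k.
Proof. by rewrite (bigID (mem A)) /=; congr (_ + _); apply: eq_bigl => k; rewrite in_setC. Qed.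

Section Game.
Variables (R : realFieldType) (V : finType) (W : V -> V -> R) (h : V -> R).
Implicit Types (x y : profile V) (s : bool).

Definition local_field x i := h i + \sum_j W i j * spin R (x j).

Definition satisfied x i := 0 <= spin R (x i) * local_field x i.

Definition flip x i := upd x i (~~ x i).

Lemma spin_flip x i j :
  spin R (flip x i j) = if j == i then - spin R (x j) else spin R (x j).
Proof. by rewrite ffunE; case: eqVneq => [->|]; rewrite ?spinN. Qed.

Lemma sum_flip (P : pred V) (c : V -> R) x i : P i ->
  \sum_(j | P j) c j * spin R (flip x i j) =
  \sum_(j | P j) c j * spin R (x j) - 2 * c i * spin R (x i).
Proof.
move=> Pi; rewrite (sum_update (f := fun j => c j * spin R (x j)) Pi).
  by rewrite spin_flip eqxx; ring.
by move=> j /negPf ji; rewrite spin_flip ji.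
Qed.

Lemma local_field_flip x i j :
  local_field (flip x i) j = local_field x j - 2 * W j i * spin R (x i).
Proof. by rewrite /local_field (sum_flip (P := predT)) // addrA. Qed.

Hypothesis W_diag : forall i, W i i = 0.

Lemma utility_upd x i b : utility W h i (upd x i b) = spin R b * local_field x i.
Proof.
rewrite /utility /local_field ffunE eqxx mulrDr mulrC; congr (_ + _ * _).
apply: eq_bigr => j _; rewrite ffunE; case: eqVneq => [->|//].
by rewrite W_diag !mul0r.
Qed.

Lemma spin_local_field_flip x i :
  spin R (flip x i i) * local_field (flip x i) i = - (spin R (x i) * local_field x i).
Proof. by rewrite spin_flip eqxx local_field_flip W_diag mulr0 mul0r subr0 mulNr. Qed.

Lemma br_stepP x y :
  br_step W h x y <-> exists2 i, y = flip x i & spin R (x i) * local_field x i <= 0.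
Proof.
split=> [[i [y_eq [br y_ne]]] | [i -> le0]].
  have yi : y i = ~~ x i by move: y_ne; case: (y i); case: (x i).
  exists i; first by apply/ffunP => j; rewrite ffunE; case: eqVneq => [->|/y_eq].
  by have := br (x i); rewrite !utility_upd yi spinN; lra.
exists i; split; [by move=> j /negPf ji; rewrite ffunE ji | split; last first].
  by rewrite ffunE eqxx; case: (x i).
by move=> b; rewrite !utility_upd ffunE eqxx; case: b; case: (x i) le0 => /=; lra.
Qed.

Lemma nashP x : nash W h x <-> forall i, satisfied x i.
Proof.
split=> [Nx i | Sx i b]; rewrite /satisfied.
  by have := Nx i (~~ x i); rewrite !utility_upd spinN; lra.
rewrite !utility_upd.
by have := Sx i; rewrite /satisfied; case: b; case: (x i) => /=; lra.
Qed.

Lemma br_path_trans x y z : br_path W h x y -> br_path W h y z -> br_path W h x z.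
Proof. by elim=> // a b c ab _ IH /IH; apply: br_cons. Qed.

Lemma not_satisfied x i : ~ satisfied x i -> spin R (x i) * local_field x i < 0.
Proof. by move/negP; rewrite -ltNge. Qed.

Lemma br_step_path x y : br_step W h x y -> br_path W h x y.
Proof. by move=> xy; apply: br_cons xy (br_refl _ _ _). Qed.

Lemma br_path_progress (I P : profile V -> Prop) (m : profile V -> nat) :
  (forall x, I x -> ~ P x -> exists2 y, br_path W h x y & I y /\ (m y < m x)%N) ->
  forall x, I x -> exists2 y, br_path W h x y & I y /\ P y.
Proof.
move=> progress x; have [n] := ubnP (m x); elim: n x => // n IHn x lt_mxn Ix.
have [Px|nPx] := pselect (P x); first by exists x; [exact: br_refl|].
have [y xy [Iy lt_my]] := progress x Ix nPx.
have [z yz Pz] := IHn y (leq_trans lt_my (ltnSE lt_mxn)) Iy.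
by exists z => //; apply: br_path_trans xy yz.
Qed.

Definition nash_absorbing : {set profile V} :=
  [set x | `[< forall y, br_path W h x y -> nash W h y >]].

Lemma nash_absorbing_nash x : x \in nash_absorbing -> nash W h x.
Proof. by rewrite inE => /asboolP; apply; apply: br_refl. Qed.

Lemma nash_absorbing_invariant : BR_invariant W h nash_absorbing.
Proof.
move=> x y; rewrite !inE => /asboolP Nx xy; apply/asboolP => z yz.
by apply: Nx; apply: br_path_trans xy yz.
Qed.

Section Gauge.
Variables (Rn : {set V}) (tau : V -> R).
Hypotheses (tau_sign : sign_vector tau Rn) (tau_gauge : unsigned_gauge W Rn tau).

Definition opinion_set x s := [set i in Rn | tau i * spin R (x i) == spin R s].

Definition opinion_satisfied x s := {in opinion_set x s, forall i, satisfied x i}.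

Lemma tau_spin i : i \in Rn -> tau i = spin R (tau i == 1).
Proof. by move=> /tau_sign [] ->; rewrite ?eqxx //=; case: eqP => //; lra. Qed.

Lemma tau_sqr i : i \in Rn -> tau i * tau i = 1.
Proof. by move=> iR; rewrite (tau_spin iR) spin_sqr. Qed.

Lemma opinion_spin x i :
  i \in Rn -> tau i * spin R (x i) = spin R ((tau i == 1) == x i).
Proof. by move=> iR; rewrite {1}(tau_spin iR) spinM. Qed.

Lemma in_opinion_set x s i :
  i \in opinion_set x s = (i \in Rn) && (((tau i == 1) == x i) == s).
Proof.
by rewrite inE; case: (boolP (i \in Rn)) => //= iR; rewrite opinion_spin // eq_spin.
Qed.

Lemma opinion_set_sub x s : opinion_set x s \subset Rn.
Proof. by apply/subsetP => i; rewrite inE => /andP[]. Qed.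

Lemma opinion_set_spin x s i : i \in opinion_set x s -> tau i * spin R (x i) = spin R s.
Proof. by rewrite inE => /andP[_ /eqP]. Qed.

Lemma gauge_weight i j : i \in Rn -> j \in Rn -> tau i * W i j * tau j = `|W i j|.
Proof.
move=> iR jR; rewrite -(ger0_norm (tau_gauge iR jR)) !normrM (tau_spin iR) (tau_spin jR).
by case: (_ == 1); case: (_ == 1); rewrite /= ?normrN normr1 mulr1 mul1r.
Qed.

Lemma setD_opinion_set x s : Rn :\: opinion_set x s = opinion_set x (~~ s).
Proof.
apply/setP => i; rewrite inE !in_opinion_set.
by case: (i \in Rn); case: s; case: ((tau i == 1) == x i).
Qed.

Lemma opinion_set_flip x i s j :
  (j \in opinion_set (flip x i) s) = (j \in opinion_set x (if j == i then ~~ s else s)).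
Proof.
rewrite !in_opinion_set ffunE; case: (eqVneq j i) => // ->.
by case: s; case: (x i); case: (tau i == 1); case: (i \in Rn).
Qed.

Lemma opinion_set_flip_out x i s : i \notin Rn -> opinion_set (flip x i) s = opinion_set x s.
Proof.
move=> iNR; apply/setP => j; rewrite opinion_set_flip; case: (eqVneq j i) => // ->.
by rewrite !in_opinion_set (negPf iNR).
Qed.

Lemma opinion_set_flip_in x i s :
  i \in opinion_set x s -> opinion_set (flip x i) s = opinion_set x s :\ i.
Proof.
move=> iO; apply/setP => j; rewrite opinion_set_flip in_setD1; case: (eqVneq j i) => // ->.
by rewrite -setD_opinion_set inE iO.
Qed.

Lemma spin_local_field_gauge x i : i \in Rn ->
  spin R (x i) * local_field x i = (tau i * spin R (x i)) * (tau i * local_field x i).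
Proof. by move=> iR; rewrite mulrACA tau_sqr ?mul1r. Qed.

Lemma gauge_term x i j : i \in Rn -> j \in Rn ->
  tau i * (W i j * spin R (x j)) = `|W i j| * (tau j * spin R (x j)).
Proof.
move=> iR jR; rewrite -(gauge_weight iR jR) -[in LHS](mul1r (spin R (x j))) -(tau_sqr jR).
by rewrite !mulrA.
Qed.

Lemma gauge_local_field_flip x i j : i \in Rn -> j \in Rn ->
  tau j * local_field (flip x i) j =
  tau j * local_field x j - 2 * `|W j i| * (tau i * spin R (x i)).
Proof.
by move=> iR jR; rewrite local_field_flip -[in RHS]mulrA -(gauge_term x jR iR); ring.
Qed.

Lemma gauge_local_field_bound x i : i \in Rn ->
  `|tau i * local_field x i -
    (tau i * h i + wB W i (opinion_set x true) - wB W i (opinion_set x false))|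
  <= wB W i (~: Rn).
Proof.
move=> iR; set term := fun j => tau i * (W i j * spin R (x j)).
have sum_opinion s : \sum_(j in opinion_set x s) term j = spin R s * wB W i (opinion_set x s).
  rewrite /wB mulr_sumr; apply: eq_bigr => j jO.
  have jR := subsetP (opinion_set_sub x s) j jO.
  by rewrite /term gauge_term // (opinion_set_spin jO) mulrC.
have outside : `|\sum_(j in ~: Rn) term j| <= wB W i (~: Rn).
  apply: le_trans (ler_norm_sum _ _ _) _; apply: ler_sum => j _.
  by rewrite !normrM (tau_spin iR) !normr_spin mul1r mulr1.
rewrite /local_field mulrDr mulr_sumr (sum_setC_split Rn) (big_setID (opinion_set x true)) /=.
rewrite (setIidPr (opinion_set_sub x true)) setD_opinion_set !sum_opinion /= mul1r mulN1r.
move: outside; rewrite !ler_norml => /andP[lo hi]; apply/andP; split; lra.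
Qed.

Lemma opinion_satisfied_flip x i s : i \in opinion_set x s -> ~ satisfied x i ->
  opinion_satisfied x (~~ s) -> opinion_satisfied (flip x i) (~~ s).
Proof.
move=> iO /not_satisfied lt0 Sx j; rewrite opinion_set_flip; case: (eqVneq j i) => [->|ji] jO.
  by rewrite /satisfied spin_local_field_flip oppr_ge0 ltW.
have iR := subsetP (opinion_set_sub x s) i iO; have jR := subsetP (opinion_set_sub x _) j jO.
have := Sx j jO; rewrite /satisfied !spin_local_field_gauge // gauge_local_field_flip //.
rewrite spin_flip (negPf ji) (opinion_set_spin iO) (opinion_set_spin jO).
by case: s {Sx iO jO} => /=; have := normr_ge0 (W j i); lra.
Qed.

Lemma reach_opinion_satisfied s x : exists2 y, br_path W h x y &
  (opinion_satisfied x (~~ s) -> opinion_satisfied y (~~ s)) /\ opinion_satisfied y s.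
Proof.
apply: (br_path_progress (m := fun y => #|opinion_set y s|)) => // y Iy.
move=> /existsNP[i /not_implyP[iO unsat]].
exists (flip y i).
  by apply/br_step_path/br_stepP; exists i => //; rewrite ltW // not_satisfied.
split; first by move=> Sx; apply: opinion_satisfied_flip (Iy Sx).
by rewrite (opinion_set_flip_in iO); apply/proper_card/properD1.
Qed.

Section Consensus.
Hypothesis indecomposable_R : indecomposable W Rn (fun i => tau i * h i - wB W i (~: Rn))
                                                  (fun i => tau i * h i + wB W i (~: Rn)).
Hypothesis dominant_R : forall i, i \in Rn -> wB W i Rn - `|h i| > wB W i (~: Rn).

Lemma consensus_of_satisfied x :
  opinion_satisfied x true -> opinion_satisfied x false -> exists s, opinion_set x s = Rn.
Proof.
move=> Splus Sminus; have [_ split_witness] := indecomposable_R.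
have [plus0|plus_ne0] := eqVneq (opinion_set x true) set0.
  by exists false; rewrite -[false]/(~~ true) -setD_opinion_set plus0 setD0.
have [minus0|minus_ne0] := eqVneq (Rn :\: opinion_set x true) set0.
  by exists true; apply/eqP; rewrite eqEsubset opinion_set_sub /= -setD_eq0 minus0.
have [i [[iO lt] | [iO lt]]] := split_witness _ (opinion_set_sub x true) plus_ne0 minus_ne0;
  rewrite setD_opinion_set in iO lt; have iR := subsetP (opinion_set_sub x _) i iO.
- have := Splus i iO; rewrite /satisfied spin_local_field_gauge // (opinion_set_spin iO) mul1r.
  by have := gauge_local_field_bound x iR; rewrite ler_norml => /andP[]; lra.
- have := Sminus i iO; rewrite /satisfied spin_local_field_gauge // (opinion_set_spin iO) mulN1r.
  by have := gauge_local_field_bound x iR; rewrite ler_norml => /andP[]; lra.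
Qed.

Lemma consensus_satisfied_strict x s i :
  opinion_set x s = Rn -> i \in Rn -> 0 < spin R (x i) * local_field x i.
Proof.
move=> cons iR; have iO : i \in opinion_set x s by rewrite cons.
have other : opinion_set x (~~ s) = set0 by rewrite -setD_opinion_set cons setDv.
have w0 : wB W i set0 = 0 by rewrite /wB big_set0.
have tau_h : `|tau i * h i| <= `|h i| by rewrite normrM (tau_spin iR) normr_spin mul1r.
have := gauge_local_field_bound x iR; have := dominant_R iR.
rewrite spin_local_field_gauge // (opinion_set_spin iO).
move: tau_h; case: s {iO} cons other => /= -> ->;
  by rewrite w0 !ler_norml => /andP[? ?] ? /andP[? ?]; lra.
Qed.

Section Potential.
Hypothesis undirected_S : undirected_on W (~: Rn).

Definition external_field x k := h k + \sum_(j in Rn) W k j * spin R (x j).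

(* The external field counts twice because the quadratic part counts every link inside S
   from both of its ends. *)
Definition potential x := \sum_(k in ~: Rn)
  (2 * external_field x k + \sum_(j in ~: Rn) W k j * spin R (x j)) * spin R (x k).

Lemma local_field_split x k :
  local_field x k = external_field x k + \sum_(j in ~: Rn) W k j * spin R (x j).
Proof. by rewrite /local_field /external_field (sum_setC_split Rn) addrA. Qed.

Lemma external_field_flip x i k :
  i \notin Rn -> external_field (flip x i) k = external_field x k.
Proof.
move=> iNR; congr (_ + _); apply: eq_bigr => j jR; rewrite spin_flip.
by case: (eqVneq j i) => // eji; move: iNR; rewrite -eji jR.
Qed.

Lemma potential_flip x i : i \notin Rn ->
  potential (flip x i) = potential x - 4 * (spin R (x i) * local_field x i).
Proof.
move=> iNR; have iS : i \in ~: Rn by rewrite in_setC.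
rewrite /potential.
under eq_bigr => k _ do rewrite external_field_flip // sum_flip // addrA mulrBl.
rewrite sumrB.
rewrite (sum_flip (fun k => 2 * external_field x k + \sum_(j in ~: Rn) W k j * spin R (x j))) //.
rewrite (sum_flip (fun k => 2 * W k i * spin R (x i))) // W_diag.
have sym : \sum_(k in ~: Rn) 2 * W k i * spin R (x i) * spin R (x k) =
           2 * spin R (x i) * \sum_(k in ~: Rn) W i k * spin R (x k).
  rewrite mulr_sumr; apply: eq_bigr => k kS; rewrite (undirected_S kS iS); ring.
rewrite sym local_field_split; ring.
Qed.

Lemma consensus_br_step x y s : opinion_set x s = Rn -> br_step W h x y ->
  opinion_set y s = Rn /\ potential x <= potential y.
Proof.
move=> cons /br_stepP[i -> le0].
have iNR : i \notin Rn.
  by apply/negP => iR; have := consensus_satisfied_strict cons iR; lra.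
by rewrite opinion_set_flip_out // potential_flip //; split => //; lra.
Qed.

Lemma consensus_br_path x y s : opinion_set x s = Rn -> br_path W h x y ->
  opinion_set y s = Rn /\ potential x <= potential y.
Proof.
move=> cons xy; elim: xy cons => [z|a b c ab _ IH] cons; first by split.
have [cons_b le_ab] := consensus_br_step cons ab; have [cons_c le_bc] := IH cons_b.
by split; last exact: le_trans le_ab le_bc.
Qed.

Lemma consensus_reaches_nash_absorbing x s : opinion_set x s = Rn ->
  exists2 y, br_path W h x y & y \in nash_absorbing.
Proof.
set above := fun y => [set z | potential y < potential z].
suff progress y : opinion_set y s = Rn -> ~ y \in nash_absorbing ->
    exists2 y', br_path W h y y' & opinion_set y' s = Rn /\ (#|above y'| < #|above y|)%N.
  by move=> cons; have [y xy [_ Ay]] := br_path_progress progress cons; exists y.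
move=> cons_y nAy; have /existsNP[z /not_implyP[yz /nashP/existsNP[i /not_satisfied lt0]]] :
    ~ forall z, br_path W h y z -> nash W h z.
  by move=> Ny; apply: nAy; rewrite inE; apply/asboolP.
have [cons_z le_yz] := consensus_br_path cons_y yz.
have iNR : i \notin Rn by apply/negP => iR; have := consensus_satisfied_strict cons_z iR; lra.
have lt_z : potential z < potential (flip z i).
  by rewrite potential_flip //; lra.
exists (flip z i).
  by apply: br_path_trans yz (br_step_path _); apply/br_stepP; exists i; rewrite // ltW.
split; first by rewrite opinion_set_flip_out.
apply/proper_card/properP; split; last by exists (flip z i); rewrite /above !inE ?ltxx //; lra.
by apply/subsetP => w; rewrite /above !inE; lra.
Qed.

Lemma nash_absorbing_reachable : globally_BR_reachable W h nash_absorbing.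
Proof.
move=> x.
have [x1 x_x1 [_ plus1]] := reach_opinion_satisfied true x.
have [x2 x1_x2 [keep_plus minus2]] := reach_opinion_satisfied false x1.
have [s cons] := consensus_of_satisfied (keep_plus plus1) minus2.
have [y x2_y Ay] := consensus_reaches_nash_absorbing cons.
by exists y => //; apply: br_path_trans x_x1 (br_path_trans x1_x2 x2_y).
Qed.

End Potential.

End Consensus.

End Gauge.

End Game.

Theorem corollary4 (R : realFieldType) (V : finType)
  (W : V -> V -> R) (h : V -> R) (Rn : {set V}) (tau : V -> R) :
  (forall i, W i i = 0) ->
  Rn != set0 ->
  structurally_balanced W Rn ->
  undirected_on W (~: Rn) ->
  sign_vector tau Rn ->
  unsigned_gauge W Rn tau ->
  indecomposable W Rn (fun i => tau i * h i - wB W i (~: Rn))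
                      (fun i => tau i * h i + wB W i (~: Rn)) ->
  (forall i, i \in Rn -> wB W i Rn - `|h i| > wB W i (~: Rn)) ->
  exists Xs : {set profile V},
    (forall x, x \in Xs -> nash W h x) /\ globally_BR_stable W h Xs.
Proof.
(* Structural balance of G_R is implied by the gauge tau, and R may be empty. *)
move=> W_diag _ _ undirected_S tau_sign tau_gauge indecomposable_R dominant_R.
exists (nash_absorbing W h); split; first exact: nash_absorbing_nash.
split; last exact: nash_absorbing_invariant.
exact: (nash_absorbing_reachable W_diag tau_sign tau_gauge indecomposable_R dominant_R
  undirected_S).
Qed.
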